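(* Let $S_r$ be the unilateral right shift on $\ell^2(\mathbb{N})$. Then the family $\{S_r^n\}_{n\in\mathbb{N}}$ is UEC on the closed unit ball of $\ell^2(\mathbb{N})$, whereas the family of adjoints $\{(S_r^* )^n\}_{n\in\mathbb{N}}$ is not UEC on that ball. Consequently, the family of maps $A\mapsto AS_r^n$ ($n\in\mathbb{N}$) on the closed unit ball of $B(\ell^2(\mathbb{N}))$ is not UEC, even though $\{S_r^n\}_{n\in\mathbb{N}}$ is UEC.
   Context: The closed unit ball $H_1$ of a separable Hilbert space $H$ carries the weak uniformity (induced by $\rho(x,y)=\sum_{i\ge1}2^{-i}|\langle x-y,h_i\rangle|$ for a dense sequence $(h_i)$ in $H_1$), and the closed unit ball $B_1$ of $B(H)$ carries the weak operator uniformity (induced by $d(A,B)=\sum_{i,j\ge1}2^{-i-j}|\langle (A-B)h_i,h_j\rangle|$). A family $\mathcal{F}$ of maps from a metric space $(X,d)$ to itself is uniformly equicontinuous (UEC) if for every $\epsilon>0$ there is $\delta>0$ such that $d(x,y)<\delta$ implies $d(f(x),f(y))<\epsilon$ for all $f\in\mathcal{F}$, $x,y\in X$. *)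

From Stdlib Require Import Reals ClassicalEpsilon.
Open Scope R_scope.

Record C := mkC { Re : R ; Im : R }.
Definition C0 : C := mkC 0 0.
Definition Cadd (z w : C) : C := mkC (Re z + Re w) (Im z + Im w).
Definition Csub (z w : C) : C := mkC (Re z - Re w) (Im z - Im w).
Definition Cmul (z w : C) : C :=
  mkC (Re z * Re w - Im z * Im w) (Re z * Im w + Im z * Re w).
Definition Cmod (z : C) : R := sqrt (Re z ^ 2 + Im z ^ 2).

Definition sum_inf (a : nat -> R) : R :=
  epsilon (inhabits 0) (fun l => infinite_sum a l).

(** Sequences indexed by N = {0,1,2,...}; l^2(N) is the square-summable ones. *)
Definition vec := nat -> C.
Definition sq_summable (x : vec) : Prop :=
  exists l, infinite_sum (fun k => Cmod (x k) ^ 2) l.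
Definition vadd (x y : vec) : vec := fun k => Cadd (x k) (y k).
Definition vsub (x y : vec) : vec := fun k => Csub (x k) (y k).
Definition vscale (c : C) (x : vec) : vec := fun k => Cmul c (x k).
Definition norm (x : vec) : R := sqrt (sum_inf (fun k => Cmod (x k) ^ 2)).
(** <x, y> = sum_k x_k * conj (y_k) *)
Definition inner (x y : vec) : C :=
  mkC (sum_inf (fun k => Re (x k) * Re (y k) + Im (x k) * Im (y k)))
      (sum_inf (fun k => Im (x k) * Re (y k) - Re (x k) * Im (y k))).

Definition in_ball (x : vec) : Prop := sq_summable x /\ norm x <= 1.

Definition dense_seq (h : nat -> vec) : Prop :=
  (forall i, in_ball (h i)) /\
  (forall x, in_ball x -> forall eps, eps > 0 -> exists i, norm (vsub x (h i)) < eps).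

(** Weak uniformity metric on H_1:  rho(x,y) = sum_{i>=1} 2^{-i} |<x-y,h_i>|
    (our sequence h is indexed from 0, so h i plays the role of h_{i+1}). *)
Definition rho (h : nat -> vec) (x y : vec) : R :=
  sum_inf (fun i => (/ 2) ^ (S i) * Cmod (inner (vsub x y) (h i))).

(** Operators on l^2(N): maps on sequences; the closed unit ball B_1 of B(H)
    consists of those that are linear on l^2, map l^2 into l^2, and have norm <= 1. *)
Definition op := vec -> vec.
Definition in_opball (A : op) : Prop :=
  (forall x, sq_summable x -> sq_summable (A x) /\ norm (A x) <= norm x) /\
  (forall x y, sq_summable x -> sq_summable y -> A (vadd x y) = vadd (A x) (A y)) /\
  (forall c x, sq_summable x -> A (vscale c x) = vscale c (A x)).

Definition dWO (h : nat -> vec) (A B : op) : R :=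
  sum_inf (fun i => sum_inf (fun j =>
    (/ 2) ^ (S i) * (/ 2) ^ (S j) * Cmod (inner (vsub (A (h i)) (B (h i))) (h j)))).

Definition UEC {X : Type} (P : X -> Prop) (d : X -> X -> R) (F : nat -> X -> X) : Prop :=
  forall eps, eps > 0 -> exists delta, delta > 0 /\
    forall n x y, P x -> P y -> d x y < delta -> d (F n x) (F n y) < eps.

Definition shiftR (x : vec) : vec :=
  fun k => match k with O => C0 | S k' => x k' end.
Definition shiftR_adj (x : vec) : vec := fun k => x (S k).

From Pilot Require Import Defs.
From Stdlib Require Import Reals Lra Lia Psatz ClassicalEpsilon FunctionalExtensionality PropExtensionality.
Open Scope R_scope.

(** Both metrics are dyadic averages [weighted a = sum_i 2^-(i+1) a_i] of bounded
    sequences, and such an average is controlled by finitely many of its terms.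

    (1) By adjointness, [rho (S_r^n x) (S_r^n y)] is the average of the pairings
        of [x - y] with the orbits [S_r^*^n h_i].  Each orbit is totally bounded
        (its energy tends to [0], and the finitely many remaining points are
        approximated by the dense sequence), so weak closeness of [x] and [y]
        controls these pairings uniformly in [n].

    (2) [S_r^m e0] is weakly at distance [coordWeight h m] (the average of the
        [m]-th coordinates of the [h_i]) from [0]; this tends to [0], while
        [S_r^*^m] maps the pair back to [e0], [0], at distance [coordWeight h 0 > 0].

    (3) For the rank-one operators [coord_op m x = x_m e0], [dWO 0 (coord_op m)]
        is [coordWeight h 0 * coordWeight h m], which tends to [0], whereas after
        composing with [S_r^m] it becomes [coordWeight h 0 ^ 2]. *)

Definition conv (a : nat -> R) : Prop := exists l, infinite_sum a l.

Lemma sum_inf_eq a l : infinite_sum a l -> sum_inf a = l.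
Proof.
  intro Hl. unfold sum_inf.
  assert (Hex : exists l, infinite_sum a l) by eauto.
  exact (uniqueness_sum _ _ _ (epsilon_spec (inhabits 0) _ Hex) Hl).
Qed.

Lemma conv_sum a : conv a -> infinite_sum a (sum_inf a).
Proof. intros [l Hl]. now rewrite (sum_inf_eq a l Hl). Qed.

Lemma sum_inf_ext a b : (forall k, a k = b k) -> sum_inf a = sum_inf b.
Proof. intro Eab. f_equal. now apply functional_extensionality. Qed.

Lemma sum_inf_iff a b :
  (forall l, infinite_sum a l <-> infinite_sum b l) -> sum_inf a = sum_inf b.
Proof.
  intro Eab. unfold sum_inf. f_equal. apply functional_extensionality. intro l.
  now apply propositional_extensionality.
Qed.

Lemma Un_cv_ext (u v : nat -> R) l : (forall n, u n = v n) -> Un_cv u l -> Un_cv v l.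
Proof.
  intros Euv Hu eps Heps. destruct (Hu eps Heps) as [N HN].
  exists N. intros n Hn. rewrite <- Euv. auto.
Qed.

Lemma infinite_sum_plus a b la lb : infinite_sum a la -> infinite_sum b lb ->
  infinite_sum (fun k => a k + b k) (la + lb).
Proof.
  intros Ha Hb. apply (Un_cv_ext (fun n => sum_f_R0 a n + sum_f_R0 b n)).
  - intro n. now rewrite sum_plus.
  - now apply CV_plus.
Qed.

Lemma infinite_sum_scal a la c : infinite_sum a la ->
  infinite_sum (fun k => c * a k) (c * la).
Proof.
  intro Ha. apply (Un_cv_ext (fun n => c * sum_f_R0 a n)).
  - intro n. rewrite scal_sum. apply sum_eq. intros. ring.
  - apply (CV_mult (fun _ => c)); [|exact Ha].
    intros eps Heps. exists 0%nat. intros. unfold Rdist. rewrite Rminus_diag, Rabs_R0. lra.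
Qed.

Lemma partial_le_sum a l n : (forall k, 0 <= a k) -> infinite_sum a l ->
  sum_f_R0 a n <= l.
Proof.
  intros Hpos Hl. apply (growing_ineq (sum_f_R0 a)); [|exact Hl].
  intro m. simpl. specialize (Hpos (S m)). lra.
Qed.

Lemma term_le_sum a n : (forall k, 0 <= a k) -> conv a -> a n <= sum_inf a.
Proof.
  intros Hpos Ha. pose proof (partial_le_sum a _ n Hpos (conv_sum a Ha)).
  destruct n as [|n]; simpl in *; [lra|].
  pose proof (cond_pos_sum a n Hpos). lra.
Qed.

Lemma comparison a b L : (forall k, 0 <= a k <= b k) -> infinite_sum b L ->
  conv a /\ sum_inf a <= L.
Proof.
  intros Hab Hb. destruct (Rseries_CV_comp a b Hab (exist _ L Hb)) as [l Hl].
  split; [now exists l|]. rewrite (sum_inf_eq a l Hl).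
  eapply Rle_cv_lim; [|exact Hl|exact Hb]. intro n. apply sum_Rle. intros. apply Hab.
Qed.

Lemma abs_comparison g b L : (forall k, Rabs (g k) <= b k) -> infinite_sum b L ->
  conv g /\ Rabs (sum_inf g) <= L.
Proof.
  intros Hg Hb.
  assert (Hb2 : infinite_sum (fun k => 2 * b k) (2 * L)) by now apply infinite_sum_scal.
  assert (Hsplit : forall k, 0 <= Rabs (g k) + g k <= 2 * b k /\ 0 <= Rabs (g k) - g k <= 2 * b k).
  { intro k. specialize (Hg k). pose proof (Rle_abs (g k)). pose proof (Rle_abs (- g k)).
    rewrite Rabs_Ropp in *. lra. }
  destruct (comparison (fun k => Rabs (g k) + g k) _ _ (fun k => proj1 (Hsplit k)) Hb2) as [[l1 H1] _].
  destruct (comparison (fun k => Rabs (g k) - g k) _ _ (fun k => proj2 (Hsplit k)) Hb2) as [[l2 H2] _].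
  assert (Hg_sum : infinite_sum g ((l1 - l2) / 2)).
  { pose proof (infinite_sum_scal _ _ (/2) (infinite_sum_plus _ _ _ _ H1 (infinite_sum_scal _ _ (-1) H2))) as H.
    apply (Un_cv_ext (sum_f_R0 (fun k => /2 * ((Rabs (g k) + g k) + -1 * (Rabs (g k) - g k))))).
    - intro n. apply sum_eq. intros. field.
    - replace ((l1 - l2) / 2) with (/2 * (l1 + -1 * l2)) by field. exact H. }
  split; [eexists; exact Hg_sum|]. rewrite (sum_inf_eq _ _ Hg_sum).
  exact (sum_cv_maj b (fun k _ => g k) 0 _ L Hg_sum Hb Hg).
Qed.

Lemma half_pow_pos n : 0 < (/2) ^ n.
Proof. apply pow_lt. lra. Qed.

Lemma half_pow_le1 n : (/2) ^ n <= 1.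
Proof. induction n; simpl; [lra|]. pose proof (half_pow_pos n). nra. Qed.

Lemma half_pow_antitone i j : (i <= j)%nat -> (/2) ^ j <= (/2) ^ i.
Proof.
  intro Hij. replace j with (i + (j - i))%nat by lia. rewrite pow_add.
  pose proof (half_pow_pos i). pose proof (half_pow_le1 (j - i)). nra.
Qed.

Lemma half_pow_small y : 0 < y -> exists N, (/2) ^ (S N) < y.
Proof.
  intro Hy. destruct (pow_lt_1_zero (/2) ltac:(rewrite Rabs_pos_eq; lra) y Hy) as [N HN].
  exists N. specialize (HN (S N) ltac:(lia)). rewrite Rabs_pos_eq in HN; auto.
  apply pow_le. lra.
Qed.

Lemma geometric_partial n : sum_f_R0 (fun j => (/2) ^ (S j)) n = 1 - (/2) ^ (S n).
Proof. induction n; simpl in *; [field|]. rewrite IHn. simpl. field. Qed.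

Lemma geometric_sum : infinite_sum (fun j => (/2) ^ (S j)) 1.
Proof.
  intros eps Heps. destruct (half_pow_small eps Heps) as [N HN].
  exists N. intros n Hn. unfold Rdist. rewrite geometric_partial.
  replace (1 - (/2) ^ (S n) - 1) with (- (/2) ^ (S n)) by ring.
  rewrite Rabs_Ropp, Rabs_pos_eq by (apply Rlt_le, half_pow_pos).
  pose proof (half_pow_antitone (S N) (S n) ltac:(lia)). lra.
Qed.

Definition weighted (a : nat -> R) : R := sum_inf (fun i => (/2) ^ (S i) * a i).

Definition bounded_by (K : R) (a : nat -> R) : Prop := forall i, 0 <= a i <= K.

Lemma weighted_terms a K : bounded_by K a ->
  forall i, 0 <= (/2) ^ (S i) * a i <= K * (/2) ^ (S i).
Proof. intros Ha i. specialize (Ha i). pose proof (half_pow_pos (S i)). split; nra. Qed.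

Lemma weighted_conv a K : bounded_by K a -> conv (fun i => (/2) ^ (S i) * a i).
Proof.
  intro Ha. pose proof (infinite_sum_scal _ _ K geometric_sum) as HK.
  rewrite Rmult_1_r in HK. exact (proj1 (comparison _ _ _ (weighted_terms a K Ha) HK)).
Qed.

Lemma weighted_ge_term a K i : bounded_by K a -> (/2) ^ (S i) * a i <= weighted a.
Proof.
  intro Ha. apply (term_le_sum (fun i => (/2) ^ (S i) * a i) i); [|exact (weighted_conv a K Ha)].
  intro k. apply (weighted_terms a K Ha).
Qed.

Lemma weighted_le a K : bounded_by K a -> weighted a <= K.
Proof.
  intro Ha. pose proof (infinite_sum_scal _ _ K geometric_sum) as HK.
  rewrite Rmult_1_r in HK. exact (proj2 (comparison _ _ _ (weighted_terms a K Ha) HK)).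
Qed.

Lemma weighted_scal c a K : bounded_by K a ->
  weighted (fun i => c * a i) = c * weighted a.
Proof.
  intro Ha. apply sum_inf_eq.
  apply (Un_cv_ext (sum_f_R0 (fun i => c * ((/2) ^ (S i) * a i)))).
  - intro n. apply sum_eq. intros. ring.
  - apply infinite_sum_scal, conv_sum. exact (weighted_conv a K Ha).
Qed.

Lemma weighted_truncation a K N : bounded_by K a ->
  weighted a <= sum_f_R0 (fun i => (/2) ^ (S i) * a i) N + K * (/2) ^ (S N).
Proof.
  intro Ha. set (s := sum_f_R0 (fun i => (/2) ^ (S i) * a i)).
  assert (HK : 0 <= K) by (specialize (Ha 0%nat); lra).
  assert (Hdecr : forall m, (N <= m)%nat -> s m + K * (/2) ^ (S m) <= s N + K * (/2) ^ (S N)).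
  { intros m Hm. induction Hm; [lra|].
    change (s (S m)) with (s m + (/2) ^ (S (S m)) * a (S m)).
    pose proof (weighted_terms a K Ha (S m)).
    assert (K * (/2) ^ (S (S m)) = K * (/2) ^ (S m) * /2) by (simpl; ring). lra. }
  apply (@Rle_cv_lim (fun m => s (m + N)%nat) (fun _ => s N + K * (/2) ^ (S N))).
  - intro m. pose proof (Hdecr (m + N)%nat ltac:(lia)).
    pose proof (half_pow_pos (S (m + N))). nra.
  - intros eps Heps. destruct (conv_sum _ (weighted_conv a K Ha) eps Heps) as [M HM].
    exists M. intros n Hn. apply HM. lia.
  - intros eps Heps. exists 0%nat. intros. unfold Rdist. rewrite Rminus_diag, Rabs_R0. lra.
Qed.

Lemma weighted_small K eps : 0 < eps -> exists N, forall a, bounded_by K a ->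
  (forall i, (i <= N)%nat -> a i <= eps / 2) -> weighted a < eps.
Proof.
  intro Heps.
  destruct (half_pow_small (eps / (2 * (Rabs K + 1)))) as [N HN].
  { apply Rdiv_lt_0_compat; [lra|]. pose proof (Rabs_pos K). lra. }
  exists N. intros a Ha Hsmall.
  assert (HK : 0 <= K) by (specialize (Ha 0%nat); lra).
  assert (Htail : K * (/2) ^ (S N) < eps / 2).
  { rewrite Rabs_pos_eq in HN by lra. pose proof (half_pow_pos (S N)).
    apply Rmult_lt_compat_l with (r := K + 1) in HN; [|lra].
    replace ((K + 1) * (eps / (2 * (K + 1)))) with (eps / 2) in HN by (field; lra). nra. }
  assert (Hhead : sum_f_R0 (fun i => (/2) ^ (S i) * a i) N <= eps / 2).
  { apply Rle_trans with (sum_f_R0 (fun i => (/2) ^ (S i) * (eps / 2)) N).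
    - apply sum_Rle. intros i Hi. pose proof (half_pow_pos (S i)).
      apply Rmult_le_compat_l; [lra|]. exact (Hsmall i Hi).
    - rewrite <- scal_sum, geometric_partial. pose proof (half_pow_pos (S N)). nra. }
  pose proof (weighted_truncation a K N Ha). lra.
Qed.

Lemma finite_choice_bound (P : nat -> nat -> Prop) : (forall a, exists j, P a j) ->
  forall N, exists J, forall a, (a <= N)%nat -> exists j, (j <= J)%nat /\ P a j.
Proof.
  intros HP N. induction N as [|N [J HJ]].
  - destruct (HP 0%nat) as [j Hj]. exists j. intros a Ha. exists j.
    replace a with 0%nat by lia. split; auto.
  - destruct (HP (S N)) as [j Hj]. exists (max J j). intros a Ha.
    destruct (Nat.eq_dec a (S N)) as [->|Hne].
    + exists j. split; [lia|exact Hj].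
    + destruct (HJ a ltac:(lia)) as [j' [Hj' Pj']]. exists j'. split; [lia|exact Pj'].
Qed.

Lemma weighted_vanishing (f : nat -> nat -> R) K : (forall m, bounded_by K (f m)) ->
  (forall i eps, 0 < eps -> exists M, forall m, (M <= m)%nat -> f m i < eps) ->
  forall d, 0 < d -> exists M, forall m, (M <= m)%nat -> weighted (f m) < d.
Proof.
  intros Hf Hcv d Hd. destruct (weighted_small K d Hd) as [N HN].
  destruct (finite_choice_bound (fun i M => forall m, (M <= m)%nat -> f m i < d / 2)
              (fun i => Hcv i (d / 2) ltac:(lra)) N) as [M HM].
  exists M. intros m Hm. apply (HN (f m) (Hf m)). intros i Hi.
  destruct (HM i Hi) as [Mi [HMi Pi]]. apply Rlt_le, Pi. lia.
Qed.

Lemma C_eq (a b : Defs.C) : Re a = Re b -> Im a = Im b -> a = b.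
Proof. destruct a, b; simpl; intros; subst; reflexivity. Qed.

Lemma Cmod_sq z : Cmod z ^ 2 = Re z ^ 2 + Im z ^ 2.
Proof. unfold Cmod. apply pow2_sqrt. nra. Qed.

Lemma Cmod_nonneg z : 0 <= Cmod z.
Proof. apply sqrt_pos. Qed.

Lemma Cmod_sq_nonneg z : 0 <= Cmod z ^ 2.
Proof. pose proof (Cmod_nonneg z). nra. Qed.

Lemma Cmod_C0 : Cmod C0 = 0.
Proof. unfold Cmod, C0. simpl. replace (0 * (0 * 1) + 0 * (0 * 1)) with 0 by ring. apply sqrt_0. Qed.

Lemma Cmod_opp z : Cmod (Csub C0 z) = Cmod z.
Proof. unfold Cmod, Csub, C0. simpl. f_equal. ring. Qed.

Lemma Cmod_le_parts z : Cmod z <= Rabs (Re z) + Rabs (Im z).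
Proof.
  pose proof (Rabs_pos (Re z)). pose proof (Rabs_pos (Im z)).
  unfold Cmod. rewrite <- (sqrt_pow2 (Rabs (Re z) + Rabs (Im z))) by lra.
  apply sqrt_le_1_alt. rewrite <- (pow2_abs (Re z)), <- (pow2_abs (Im z)). nra.
Qed.

Lemma parts_le_Cmod z : Rabs (Re z) <= Cmod z /\ Rabs (Im z) <= Cmod z.
Proof.
  unfold Cmod. split;
  [rewrite <- (sqrt_pow2 (Rabs (Re z))) by apply Rabs_pos
  |rewrite <- (sqrt_pow2 (Rabs (Im z))) by apply Rabs_pos];
  apply sqrt_le_1_alt; rewrite pow2_abs;
  [pose proof (pow2_ge_0 (Im z))|pose proof (pow2_ge_0 (Re z))]; lra.
Qed.

Lemma Cmod_mul_conj a b :
  Cmod (mkC (Re a * Re b + Im a * Im b) (Im a * Re b - Re a * Im b)) = Cmod a * Cmod b.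
Proof.
  unfold Cmod. simpl. rewrite <- sqrt_mult by nra. f_equal. ring.
Qed.

Definition energy (u : vec) : R := sum_inf (fun k => Cmod (u k) ^ 2).

Lemma energy_sum u : sq_summable u -> infinite_sum (fun k => Cmod (u k) ^ 2) (energy u).
Proof. intro Hu. apply conv_sum. exact Hu. Qed.

Lemma coord_le_energy u k : sq_summable u -> Cmod (u k) ^ 2 <= energy u.
Proof.
  intro Hu. apply (term_le_sum (fun k => Cmod (u k) ^ 2)); [|exact Hu].
  intro; apply Cmod_sq_nonneg.
Qed.

Lemma energy_nonneg u : sq_summable u -> 0 <= energy u.
Proof. intro Hu. pose proof (coord_le_energy u 0 Hu). pose proof (Cmod_sq_nonneg (u 0%nat)). lra. Qed.

Lemma in_ball_energy x : in_ball x <-> sq_summable x /\ energy x <= 1.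
Proof.
  split; intros [Hs Hn]; split; auto; pose proof (energy_nonneg x Hs).
  - unfold norm in Hn. apply sqrt_le_0; [lra|lra|]. now rewrite sqrt_1.
  - unfold norm. rewrite <- sqrt_1. now apply sqrt_le_1_alt.
Qed.

Lemma ball_coord_le1 x k : in_ball x -> Cmod (x k) <= 1.
Proof.
  intro Hx. apply in_ball_energy in Hx as [Hs He].
  pose proof (coord_le_energy x k Hs). pose proof (Cmod_nonneg (x k)). nra.
Qed.

Lemma energy_lt_of_norm_lt x r : sq_summable x -> norm x < r -> energy x < r ^ 2.
Proof.
  intros Hs Hn. change (sqrt (energy x) < r) in Hn. pose proof (energy_nonneg x Hs).
  pose proof (sqrt_pos (energy x)). rewrite <- (pow2_sqrt (energy x)) by auto. nra.
Qed.

Lemma vsub_energy x y : sq_summable x -> sq_summable y ->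
  sq_summable (vsub x y) /\ energy (vsub x y) <= 2 * energy x + 2 * energy y.
Proof.
  intros Hx Hy.
  pose proof (infinite_sum_plus _ _ _ _ (infinite_sum_scal _ _ 2 (energy_sum x Hx))
                                       (infinite_sum_scal _ _ 2 (energy_sum y Hy))) as Hsum.
  assert (Hb : forall k, 0 <= Cmod (vsub x y k) ^ 2 <= 2 * Cmod (x k) ^ 2 + 2 * Cmod (y k) ^ 2).
  { intro k. split; [apply Cmod_sq_nonneg|]. unfold vsub, Csub. rewrite !Cmod_sq. simpl.
    pose proof (pow2_ge_0 (Re (x k) + Re (y k))). pose proof (pow2_ge_0 (Im (x k) + Im (y k))). nra. }
  exact (comparison _ _ _ Hb Hsum).
Qed.

Lemma ball_vsub_energy x y : in_ball x -> in_ball y ->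
  sq_summable (vsub x y) /\ energy (vsub x y) <= 4.
Proof.
  intros Hx Hy. apply in_ball_energy in Hx as [Hxs Hxe]. apply in_ball_energy in Hy as [Hys Hye].
  destruct (vsub_energy x y Hxs Hys). split; auto. lra.
Qed.

Definition inner_re (u w : vec) (k : nat) : R := Re (u k) * Re (w k) + Im (u k) * Im (w k).
Definition inner_im (u w : vec) (k : nat) : R := Im (u k) * Re (w k) - Re (u k) * Im (w k).

Lemma inner_parts u w : inner u w = mkC (sum_inf (inner_re u w)) (sum_inf (inner_im u w)).
Proof. reflexivity. Qed.

Lemma amgm a b c d t : 0 < t -> 2 * Rabs (a * b + c * d) <= t * (a ^ 2 + c ^ 2) + (b ^ 2 + d ^ 2) / t.
Proof.
  intros Ht. apply Rmult_le_reg_l with t; [lra|].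
  replace (t * (t * (a ^ 2 + c ^ 2) + (b ^ 2 + d ^ 2) / t)) with ((t * a) ^ 2 + (t * c) ^ 2 + b ^ 2 + d ^ 2)
    by (field; lra).
  pose proof (pow2_ge_0 (t * a - b)). pose proof (pow2_ge_0 (t * a + b)).
  pose proof (pow2_ge_0 (t * c - d)). pose proof (pow2_ge_0 (t * c + d)).
  unfold Rabs; destruct Rcase_abs; nra.
Qed.

Lemma inner_bound u w t : sq_summable u -> sq_summable w -> 0 < t ->
  conv (inner_re u w) /\ conv (inner_im u w) /\
  Rabs (Re (inner u w)) + Rabs (Im (inner u w)) <= t * energy u + energy w / t.
Proof.
  intros Hu Hw Ht.
  pose proof (infinite_sum_scal _ _ (/2) (infinite_sum_plus _ _ _ _
      (infinite_sum_scal _ _ t (energy_sum u Hu)) (infinite_sum_scal _ _ (/t) (energy_sum w Hw)))) as Hsum.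
  assert (Hre : forall k, Rabs (inner_re u w k) <= /2 * (t * Cmod (u k) ^ 2 + /t * Cmod (w k) ^ 2)).
  { intro k. rewrite !Cmod_sq. unfold inner_re.
    pose proof (amgm (Re (u k)) (Re (w k)) (Im (u k)) (Im (w k)) t Ht). unfold Rdiv in *. lra. }
  assert (Him : forall k, Rabs (inner_im u w k) <= /2 * (t * Cmod (u k) ^ 2 + /t * Cmod (w k) ^ 2)).
  { intro k. rewrite !Cmod_sq. unfold inner_im.
    pose proof (amgm (Im (u k)) (Re (w k)) (Re (u k)) (- Im (w k)) t Ht).
    replace (Im (u k) * Re (w k) + Re (u k) * - Im (w k)) with (Im (u k) * Re (w k) - Re (u k) * Im (w k)) in H by ring.
    replace ((- Im (w k)) ^ 2) with (Im (w k) ^ 2) in H by ring. unfold Rdiv in *. lra. }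
  destruct (abs_comparison _ _ _ Hre Hsum) as [Cre Bre].
  destruct (abs_comparison _ _ _ Him Hsum) as [Cim Bim].
  split; [exact Cre|split; [exact Cim|]]. rewrite inner_parts. simpl. unfold Rdiv. lra.
Qed.

Lemma Cmod_inner_le u w t : sq_summable u -> sq_summable w -> 0 < t ->
  Cmod (inner u w) <= t * energy u + energy w / t.
Proof.
  intros Hu Hw Ht. destruct (inner_bound u w t Hu Hw Ht) as [_ [_ H]].
  pose proof (Cmod_le_parts (inner u w)). lra.
Qed.

Lemma Cmod_inner_le5 z w : sq_summable z -> energy z <= 4 -> in_ball w -> Cmod (inner z w) <= 5.
Proof.
  intros Hz Hze Hw. apply in_ball_energy in Hw as [Hws Hwe].
  pose proof (Cmod_inner_le z w 1 Hz Hws ltac:(lra)). unfold Rdiv in H. rewrite Rinv_1 in H. lra.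
Qed.

Lemma inner_perturb u w v t : sq_summable u -> sq_summable w -> sq_summable v -> 0 < t ->
  Cmod (inner u w) <= 2 * Cmod (inner u v) + t * energy u + energy (vsub w v) / t.
Proof.
  intros Hu Hw Hv Ht.
  destruct (vsub_energy w v Hw Hv) as [Hd _].
  destruct (inner_bound u v t Hu Hv Ht) as [Cre1 [Cim1 _]].
  destruct (inner_bound u (vsub w v) t Hu Hd Ht) as [Cre2 [Cim2 Bd]].
  assert (Ere : sum_inf (inner_re u w) = sum_inf (inner_re u v) + sum_inf (inner_re u (vsub w v))).
  { apply sum_inf_eq.
    apply (Un_cv_ext (sum_f_R0 (fun k => inner_re u v k + inner_re u (vsub w v) k))).
    - intro n. apply sum_eq. intros. unfold inner_re, vsub, Csub. simpl. ring.
    - apply infinite_sum_plus; now apply conv_sum. }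
  assert (Eim : sum_inf (inner_im u w) = sum_inf (inner_im u v) + sum_inf (inner_im u (vsub w v))).
  { apply sum_inf_eq.
    apply (Un_cv_ext (sum_f_R0 (fun k => inner_im u v k + inner_im u (vsub w v) k))).
    - intro n. apply sum_eq. intros. unfold inner_im, vsub, Csub. simpl. ring.
    - apply infinite_sum_plus; now apply conv_sum. }
  pose proof (Cmod_le_parts (inner u w)) as Hw_parts.
  destruct (parts_le_Cmod (inner u v)) as [Hv_re Hv_im].
  rewrite !inner_parts in *. simpl in *. rewrite Ere, Eim in Hw_parts |- *.
  pose proof (Rabs_triang (sum_inf (inner_re u v)) (sum_inf (inner_re u (vsub w v)))).
  pose proof (Rabs_triang (sum_inf (inner_im u v)) (sum_inf (inner_im u (vsub w v)))).
  lra.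
Qed.

(** * The shifts *)

Lemma iter_adj_apply n w k : Nat.iter n shiftR_adj w k = w (n + k)%nat.
Proof.
  revert k. induction n as [|n IH]; intro k; [reflexivity|].
  change (Nat.iter (S n) shiftR_adj w k) with (Nat.iter n shiftR_adj w (S k)).
  rewrite IH. f_equal. lia.
Qed.

Lemma iter_shiftR_apply n x k : Nat.iter n shiftR x (n + k)%nat = x k.
Proof. induction n; [reflexivity|exact IHn]. Qed.

Lemma iter_shiftR_at n x : Nat.iter n shiftR x n = x 0%nat.
Proof. rewrite <- (iter_shiftR_apply n x 0), Nat.add_0_r. reflexivity. Qed.

Lemma iter_adj_shiftR n x : Nat.iter n shiftR_adj (Nat.iter n shiftR x) = x.
Proof.
  induction n as [|n IH]; [reflexivity|].
  rewrite Nat.iter_succ_r. exact IH.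
Qed.

Lemma iter_shiftR_vsub n x y :
  vsub (Nat.iter n shiftR x) (Nat.iter n shiftR y) = Nat.iter n shiftR (vsub x y).
Proof.
  induction n as [|n IH]; [reflexivity|]. simpl. rewrite <- IH.
  apply functional_extensionality. intros [|k]; [|reflexivity].
  apply C_eq; unfold vsub, Csub, C0; simpl; ring.
Qed.

Lemma infinite_sum_shift a b : a 0%nat = 0 -> (forall k, a (S k) = b k) ->
  forall l, infinite_sum a l <-> infinite_sum b l.
Proof.
  intros H0 HS l.
  assert (P : forall n, sum_f_R0 a (S n) = sum_f_R0 b n).
  { induction n as [|n IH]; simpl in *; [rewrite H0, HS; ring|]. rewrite IH, HS. reflexivity. }
  split; intros H eps Heps; destruct (H eps Heps) as [N HN].
  - exists N. intros n Hn. rewrite <- P. apply HN. lia.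
  - exists (S N). intros [|n] Hn; [lia|]. rewrite P. apply HN. lia.
Qed.

Lemma inner_shiftR u w : inner (shiftR u) w = inner u (shiftR_adj w).
Proof.
  rewrite !inner_parts. f_equal; apply sum_inf_iff; apply infinite_sum_shift; try reflexivity;
  unfold inner_re, inner_im, shiftR, C0; simpl; ring.
Qed.

Lemma inner_iter_shift n u w : inner (Nat.iter n shiftR u) w = inner u (Nat.iter n shiftR_adj w).
Proof.
  revert w. induction n as [|n IH]; intro w; [reflexivity|].
  change (inner (shiftR (Nat.iter n shiftR u)) w = inner u (Nat.iter (S n) shiftR_adj w)).
  rewrite inner_shiftR, IH, <- Nat.iter_succ_r. reflexivity.
Qed.

Lemma iter_shiftR_energy n u : sq_summable u ->
  sq_summable (Nat.iter n shiftR u) /\ energy (Nat.iter n shiftR u) = energy u.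
Proof.
  intro Hu. induction n as [|n [Hs He]]; [auto|].
  assert (Hiff : forall l, infinite_sum (fun k => Cmod (shiftR (Nat.iter n shiftR u) k) ^ 2) l <->
                         infinite_sum (fun k => Cmod (Nat.iter n shiftR u k) ^ 2) l).
  { apply infinite_sum_shift; [|reflexivity]. simpl. rewrite Cmod_C0. ring. }
  split.
  - destruct Hs as [l Hl]. exists l. now apply Hiff.
  - rewrite <- He. exact (sum_inf_iff _ _ Hiff).
Qed.

Lemma infinite_sum_tail b l : infinite_sum b l -> infinite_sum (fun k => b (S k)) (l - b 0%nat).
Proof.
  intro H.
  assert (Hpart : forall n, sum_f_R0 (fun k => b (S k)) n = sum_f_R0 b (S n) - b 0%nat).
  { induction n as [|n IH]; simpl in *; [ring|]. rewrite IH. ring. }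
  intros eps Heps. destruct (H eps Heps) as [N HN]. exists N. intros n Hn.
  unfold Rdist. rewrite Hpart.
  replace (sum_f_R0 b (S n) - b 0%nat - (l - b 0%nat)) with (sum_f_R0 b (S n) - l) by ring.
  apply HN. lia.
Qed.

Lemma adj_energy_tail w n : sq_summable w ->
  infinite_sum (fun k => Cmod (Nat.iter (S n) shiftR_adj w k) ^ 2)
               (energy w - sum_f_R0 (fun k => Cmod (w k) ^ 2) n).
Proof.
  intro Hw. induction n as [|n IH].
  - exact (infinite_sum_tail _ _ (energy_sum w Hw)).
  - pose proof (infinite_sum_tail _ _ IH) as Htail. cbv beta in Htail.
    rewrite iter_adj_apply, Nat.add_0_r in Htail. rewrite tech5.
    replace (energy w - (sum_f_R0 (fun k => Cmod (w k) ^ 2) n + Cmod (w (S n)) ^ 2))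
      with (energy w - sum_f_R0 (fun k => Cmod (w k) ^ 2) n - Cmod (w (S n)) ^ 2) by ring.
    apply (Un_cv_ext (sum_f_R0 (fun k => Cmod (Nat.iter (S n) shiftR_adj w (S k)) ^ 2))); [|exact Htail].
    intro m. apply sum_eq. intros k _. rewrite !iter_adj_apply.
    now replace (S n + S k)%nat with (S (S n) + k)%nat by lia.
Qed.

Lemma iter_adj_energy n w : sq_summable w ->
  sq_summable (Nat.iter n shiftR_adj w) /\ energy (Nat.iter n shiftR_adj w) <= energy w.
Proof.
  intro Hw. destruct n as [|n]; [split; [exact Hw|apply Rle_refl]|].
  pose proof (adj_energy_tail w n Hw) as Htail. split; [eexists; exact Htail|].
  unfold energy at 1. rewrite (sum_inf_eq _ _ Htail). pose proof (cond_pos_sum _ n (fun k => Cmod_sq_nonneg (w k))). lra.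
Qed.

Lemma iter_adj_in_ball n w : in_ball w -> in_ball (Nat.iter n shiftR_adj w).
Proof.
  rewrite !in_ball_energy. intros [Hs He]. destruct (iter_adj_energy n w Hs). split; auto. lra.
Qed.

Lemma iter_adj_energy_vanishes w th : sq_summable w -> 0 < th ->
  exists M, forall n, (M <= n)%nat -> energy (Nat.iter n shiftR_adj w) < th.
Proof.
  intros Hw Hth. destruct (energy_sum w Hw th Hth) as [N HN].
  exists (S N). intros [|n] Hn; [lia|]. unfold energy.
  rewrite (sum_inf_eq _ _ (adj_energy_tail w n Hw)).
  specialize (HN n ltac:(lia)). unfold Rdist in HN. apply Rabs_def2 in HN. lra.
Qed.

Lemma coord_vanishes w eps : sq_summable w -> 0 < eps ->
  exists M, forall m, (M <= m)%nat -> Cmod (w m) < eps.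
Proof.
  intros Hw Heps. destruct (iter_adj_energy_vanishes w (eps * eps) Hw ltac:(nra)) as [M HM].
  exists M. intros m Hm. specialize (HM m Hm).
  pose proof (coord_le_energy _ 0 (proj1 (iter_adj_energy m w Hw))) as Hc.
  rewrite iter_adj_apply, Nat.add_0_r in Hc. pose proof (Cmod_nonneg (w m)). nra.
Qed.

(** * Uniform equicontinuity of the powers of [S_r] *)

Lemma ratio_bound x e : 0 < e -> x < e * e / 64 -> x / (e / 16) < e / 4.
Proof.
  intros He Hx. apply Rmult_lt_reg_r with (e / 16); [lra|].
  unfold Rdiv at 1. rewrite Rmult_assoc, Rinv_l by lra. lra.
Qed.

Lemma inner_small_of_small z w e : sq_summable z -> energy z <= 4 -> sq_summable w -> 0 < e ->
  energy w < e * e / 64 -> Cmod (inner z w) <= e.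
Proof.
  intros Hz Hze Hw He Hwe. pose proof (Cmod_inner_le z w (e / 16) Hz Hw ltac:(lra)).
  pose proof (ratio_bound _ _ He Hwe). assert (e / 16 * energy z <= e / 4) by nra. lra.
Qed.

Lemma inner_small_of_near z w v e : sq_summable z -> energy z <= 4 -> sq_summable w ->
  sq_summable v -> 0 < e -> Cmod (inner z v) <= e / 4 -> energy (vsub w v) < e * e / 64 ->
  Cmod (inner z w) <= e.
Proof.
  intros Hz Hze Hw Hv He Hzv Hwv. pose proof (inner_perturb z w v (e / 16) Hz Hw Hv ltac:(lra)).
  pose proof (ratio_bound _ _ He Hwv). assert (e / 16 * energy z <= e / 4) by nra. lra.
Qed.

Section ShiftPowers.
Variable h : nat -> vec.
Hypothesis Hh : dense_seq h.

(** The orbit of a point of the ball under [S_r^*] is totally bounded: up to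
    [th], it is covered by [0] and finitely many points of the dense sequence. *)
Lemma adjoint_orbit_net w th : in_ball w -> 0 < th -> exists J, forall n,
  energy (Nat.iter n shiftR_adj w) < th \/
  exists j, (j <= J)%nat /\ energy (vsub (Nat.iter n shiftR_adj w) (h j)) < th.
Proof.
  intros Hw Hth. pose proof (proj1 (proj1 (in_ball_energy w) Hw)) as Hws.
  destruct (iter_adj_energy_vanishes w th Hws Hth) as [M HM].
  assert (Happrox : forall n, exists j, energy (vsub (Nat.iter n shiftR_adj w) (h j)) < th).
  { intro n. pose proof (iter_adj_in_ball n w Hw) as Hn.
    destruct (proj2 Hh _ Hn (sqrt th) (sqrt_lt_R0 _ Hth)) as [j Hj]. exists j.
    destruct (vsub_energy _ (h j) (proj1 Hn) (proj1 (proj1 Hh j))) as [Hd _].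
    pose proof (energy_lt_of_norm_lt _ _ Hd Hj) as Hlt. now rewrite pow2_sqrt in Hlt by lra. }
  destruct (finite_choice_bound _ Happrox M) as [J HJ]. exists J. intro n.
  destruct (Nat.le_gt_cases M n) as [Hn|Hn]; [left; exact (HM n Hn)|].
  right. exact (HJ n ltac:(lia)).
Qed.

Lemma rho_controls_inner x y j : in_ball x -> in_ball y ->
  (/2) ^ (S j) * Cmod (inner (vsub x y) (h j)) <= rho h x y.
Proof.
  intros Hx Hy. destruct (ball_vsub_energy x y Hx Hy) as [Hz Hze].
  apply (weighted_ge_term (fun i => Cmod (inner (vsub x y) (h i))) 5).
  intro i. split; [apply Cmod_nonneg|exact (Cmod_inner_le5 _ _ Hz Hze (proj1 Hh i))].
Qed.

Lemma shifted_pairings_small e N : 0 < e -> exists delta, delta > 0 /\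
  forall n x y, in_ball x -> in_ball y -> rho h x y < delta ->
  forall i, (i <= N)%nat -> Cmod (inner (vsub x y) (Nat.iter n shiftR_adj (h i))) <= e.
Proof.
  intro He. set (th := e * e / 64). assert (Hth : 0 < th) by (unfold th; nra).
  destruct (finite_choice_bound _ (fun i => adjoint_orbit_net (h i) th (proj1 Hh i) Hth) N) as [J HJ].
  exists (e / 4 * (/2) ^ (S J)). split; [pose proof (half_pow_pos (S J)); nra|].
  intros n x y Hx Hy Hrho i Hi.
  destruct (ball_vsub_energy x y Hx Hy) as [Hz Hze].
  pose proof (iter_adj_in_ball n _ (proj1 Hh i)) as [Hws _].
  destruct (HJ i Hi) as [Ji [HJi Hnet]]. destruct (Hnet n) as [Hsmall|[j [Hj Hnear]]].
  - exact (inner_small_of_small _ _ e Hz Hze Hws He Hsmall).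
  - apply (inner_small_of_near _ _ (h j) e Hz Hze Hws (proj1 (proj1 Hh j)) He); [|exact Hnear].
    pose proof (rho_controls_inner x y j Hx Hy).
    pose proof (half_pow_antitone (S j) (S J) ltac:(lia)). pose proof (half_pow_pos (S J)).
    pose proof (Cmod_nonneg (inner (vsub x y) (h j))).
    assert (Hlt : (/2) ^ (S J) * Cmod (inner (vsub x y) (h j)) < (/2) ^ (S J) * (e / 4)) by nra.
    apply Rmult_lt_reg_l in Hlt; lra.
Qed.

(** The powers of [S_r] are uniformly equicontinuous: the weak distance of
    [S_r^n x], [S_r^n y] is the dyadic average of [|<x - y, S_r^*^n h_i>|],
    controlled by its first terms. *)
Lemma shift_powers_UEC : UEC in_ball (rho h) (fun n x => Nat.iter n shiftR x).
Proof.
  intros eps Heps. destruct (weighted_small 5 eps Heps) as [N HN].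
  destruct (shifted_pairings_small (eps / 2) N ltac:(lra)) as [d [Hd Hsmall]].
  exists d. split; [exact Hd|]. intros n x y Hx Hy Hrho.
  destruct (ball_vsub_energy x y Hx Hy) as [Hz Hze].
  assert (Hrho_n : rho h (Nat.iter n shiftR x) (Nat.iter n shiftR y)
                   = weighted (fun i => Cmod (inner (vsub x y) (Nat.iter n shiftR_adj (h i))))).
  { unfold rho. rewrite iter_shiftR_vsub. apply sum_inf_ext. intro i. now rewrite inner_iter_shift. }
  rewrite Hrho_n. apply HN; [|exact (Hsmall n x y Hx Hy Hrho)].
  intro i. split; [apply Cmod_nonneg|].
  exact (Cmod_inner_le5 _ _ Hz Hze (iter_adj_in_ball n _ (proj1 Hh i))).
Qed.

End ShiftPowers.

Definition single (a : Defs.C) : vec := fun k => match k with O => a | S _ => C0 end.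
Definition zerov : vec := single C0.
Definition e0 : vec := single (mkC 1 0).

Lemma infinite_sum_single a : (forall k, a (S k) = 0) -> infinite_sum a (a 0%nat).
Proof.
  intros Ha eps Heps. exists 0%nat. intros n _. unfold Rdist.
  replace (sum_f_R0 a n) with (a 0%nat); [rewrite Rminus_diag, Rabs_R0; lra|].
  induction n as [|n IH]; [reflexivity|]. simpl. rewrite <- IH, Ha. ring.
Qed.

Lemma single_energy a : sq_summable (single a) /\ energy (single a) = Cmod a ^ 2.
Proof.
  assert (H : infinite_sum (fun k => Cmod (single a k) ^ 2) (Cmod a ^ 2)).
  { apply (infinite_sum_single (fun k => Cmod (single a k) ^ 2)).
    intro k. simpl. rewrite Cmod_C0. ring. }
  split; [eexists; exact H|exact (sum_inf_eq _ _ H)].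
Qed.

Lemma single_in_ball a : Cmod a <= 1 -> in_ball (single a).
Proof.
  intro Ha. apply in_ball_energy. destruct (single_energy a) as [Hs He].
  split; [exact Hs|]. rewrite He. pose proof (Cmod_nonneg a). nra.
Qed.

Lemma Cmod_inner_single a w : Cmod (inner (single a) w) = Cmod a * Cmod (w 0%nat).
Proof.
  rewrite <- Cmod_mul_conj, inner_parts. do 2 f_equal; apply sum_inf_eq;
  [apply (infinite_sum_single (inner_re (single a) w))
  |apply (infinite_sum_single (inner_im (single a) w))];
  intro k; unfold inner_re, inner_im, C0; simpl; ring.
Qed.

Lemma Cmod_inner_shifted_single m a w :
  Cmod (inner (Nat.iter m shiftR (single a)) w) = Cmod a * Cmod (w m).
Proof.
  rewrite inner_iter_shift, Cmod_inner_single, iter_adj_apply, Nat.add_0_r. reflexivity.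
Qed.

Lemma vsub_zerov_r x : vsub x zerov = x.
Proof.
  apply functional_extensionality. intro k.
  apply C_eq; unfold vsub, Csub, zerov, single; destruct k; simpl; ring.
Qed.

Lemma vsub_zerov_single a : vsub zerov (single a) = single (Csub C0 a).
Proof.
  apply functional_extensionality. intros [|k]; [reflexivity|].
  apply C_eq; unfold vsub, Csub, zerov, single, C0; simpl; ring.
Qed.

Lemma iter_adj_zerov n : Nat.iter n shiftR_adj zerov = zerov.
Proof.
  apply functional_extensionality. intro k. rewrite iter_adj_apply.
  unfold zerov, single. now destruct (n + k)%nat, k.
Qed.

Lemma Cmod_one : Cmod (mkC 1 0) = 1.
Proof. unfold Cmod. simpl. replace (1 * (1 * 1) + 0 * (0 * 1)) with 1 by ring. apply sqrt_1. Qed.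

(** * The dyadic average of the [m]-th coordinates of the dense sequence *)

Definition coordWeight (h : nat -> vec) (m : nat) : R := weighted (fun i => Cmod (h i m)).

Section CoordWeight.
Variable h : nat -> vec.
Hypothesis Hh : dense_seq h.

Lemma coords_bounded m : bounded_by 1 (fun i => Cmod (h i m)).
Proof. intro i. split; [apply Cmod_nonneg|apply ball_coord_le1, Hh]. Qed.

Lemma coordWeight_le1 m : coordWeight h m <= 1.
Proof. exact (weighted_le _ _ (coords_bounded m)). Qed.

(** Some [h i] is close to [e0], so the [0]-th coordinates do not all vanish. *)
Lemma coordWeight_pos : 0 < coordWeight h 0.
Proof.
  destruct (single_energy (mkC 1 0)) as [He0s He0E]. rewrite Cmod_one in He0E.
  destruct (proj2 Hh e0 (single_in_ball _ (Req_le _ _ Cmod_one)) 1 ltac:(lra)) as [i Hi].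
  assert (Hhi : sq_summable (h i)) by apply (proj1 Hh i).
  destruct (vsub_energy e0 (h i) He0s Hhi) as [Hd _].
  pose proof (energy_lt_of_norm_lt _ _ Hd Hi) as Hlt.
  pose proof (coord_le_energy _ 0 Hd) as Hc0.
  change (vsub e0 (h i) 0%nat) with (mkC (1 - Re (h i 0%nat)) (0 - Im (h i 0%nat))) in Hc0.
  rewrite Cmod_sq in Hc0. cbn [Re Im] in Hc0.
  assert (Hpos : 0 < Cmod (h i 0%nat) ^ 2) by (rewrite Cmod_sq; nra).
  pose proof (Cmod_nonneg (h i 0%nat)).
  pose proof (weighted_ge_term _ _ i (coords_bounded 0)). pose proof (half_pow_pos (S i)).
  unfold coordWeight. nra.
Qed.

Lemma coordWeight_vanishes d : 0 < d -> exists M, forall m, (M <= m)%nat -> coordWeight h m < d.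
Proof.
  apply (weighted_vanishing (fun m i => Cmod (h i m)) 1 coords_bounded).
  intros i eps Heps. exact (coord_vanishes (h i) eps (proj1 (proj1 Hh i)) Heps).
Qed.

Lemma rho_shifted_e0 m : rho h (Nat.iter m shiftR e0) zerov = coordWeight h m.
Proof.
  unfold rho, coordWeight, weighted. rewrite vsub_zerov_r. apply sum_inf_ext. intro i.
  unfold e0. rewrite Cmod_inner_shifted_single, Cmod_one. ring.
Qed.

(** The powers of [S_r^*] are not uniformly equicontinuous: [S_r^m e0] tends
    weakly to [0], but [S_r^*] pulls it back to [e0] at fixed distance. *)
Lemma adjoint_powers_not_UEC : ~ UEC in_ball (rho h) (fun n x => Nat.iter n shiftR_adj x).
Proof.
  intro Huec. destruct (Huec (coordWeight h 0) coordWeight_pos) as [d [Hd Hcont]].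
  destruct (coordWeight_vanishes d Hd) as [m Hm].
  assert (Hin : in_ball (Nat.iter m shiftR e0)).
  { destruct (proj1 (in_ball_energy e0) (single_in_ball _ (Req_le _ _ Cmod_one))) as [Hs HE].
    destruct (iter_shiftR_energy m e0 Hs) as [Hs' HE'].
    apply in_ball_energy. split; [exact Hs'|]. now rewrite HE'. }
  specialize (Hcont m _ zerov Hin (single_in_ball C0 ltac:(rewrite Cmod_C0; lra))).
  rewrite rho_shifted_e0, iter_adj_shiftR, iter_adj_zerov in Hcont.
  specialize (Hcont (Hm m (Nat.le_refl m))).
  pose proof (rho_shifted_e0 0) as Hrho0. change (Nat.iter 0 shiftR e0) with e0 in Hrho0. lra.
Qed.

(** * Rank-one operators *)

Definition zero_op : op := fun _ => zerov.
Definition coord_op (m : nat) : op := fun x => single (x m).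

Lemma zero_op_in_opball : in_opball zero_op.
Proof.
  destruct (single_energy C0) as [Hs HE]. rewrite Cmod_C0 in HE.
  split; [|split].
  - intros x Hx. split; [exact Hs|]. unfold zero_op, zerov, norm.
    change (sqrt (energy (single C0)) <= sqrt (energy x)). rewrite HE.
    apply sqrt_le_1_alt. pose proof (energy_nonneg x Hx). lra.
  - intros. apply functional_extensionality. intro k.
    apply C_eq; unfold zero_op, vadd, Cadd, zerov, single, C0; destruct k; simpl; ring.
  - intros. apply functional_extensionality. intro k.
    apply C_eq; unfold zero_op, vscale, Cmul, zerov, single, C0; destruct k; simpl; ring.
Qed.

Lemma coord_op_in_opball m : in_opball (coord_op m).
Proof.
  split; [|split].
  - intros x Hx. destruct (single_energy (x m)) as [Hs HE]. split; [exact Hs|].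
    unfold coord_op, norm. change (sqrt (energy (single (x m))) <= sqrt (energy x)).
    rewrite HE. apply sqrt_le_1_alt. exact (coord_le_energy x m Hx).
  - intros. apply functional_extensionality. intros [|k]; [reflexivity|].
    apply C_eq; unfold coord_op, vadd, Cadd, single, C0; simpl; ring.
  - intros. apply functional_extensionality. intros [|k]; [reflexivity|].
    apply C_eq; unfold coord_op, vscale, Cmul, single, C0; simpl; ring.
Qed.

Lemma dWO_rank_one (A B : op) (a : nat -> Defs.C) :
  (forall i, vsub (A (h i)) (B (h i)) = single (a i)) -> bounded_by 1 (fun i => Cmod (a i)) ->
  dWO h A B = coordWeight h 0 * weighted (fun i => Cmod (a i)).
Proof.
  intros Hdiff Ha. rewrite <- (weighted_scal _ _ _ Ha). unfold dWO.
  apply sum_inf_ext. intro i. rewrite Hdiff.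
  transitivity (weighted (fun j => (/2) ^ (S i) * Cmod (a i) * Cmod (h j 0%nat))).
  - apply sum_inf_ext. intro j. rewrite Cmod_inner_single. ring.
  - rewrite (weighted_scal _ _ _ (coords_bounded 0)). unfold coordWeight. ring.
Qed.

(** Composing with powers of [S_r] is not uniformly equicontinuous on [B_1]:
    [0] and [coord_op m] are weakly close for large [m], but after composing
    with [S_r^m] their distance is the fixed number [coordWeight h 0 ^ 2]. *)
Lemma right_composition_not_UEC :
  ~ UEC in_opball (dWO h) (fun n (A : op) => fun x => A (Nat.iter n shiftR x)).
Proof.
  intro Huec. pose proof coordWeight_pos as Hc0. pose proof (coordWeight_le1 0) as Hc1.
  destruct (Huec (coordWeight h 0 * coordWeight h 0) ltac:(nra)) as [d [Hd Hcont]].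
  destruct (coordWeight_vanishes d Hd) as [m Hm]. specialize (Hm m (Nat.le_refl m)).
  assert (Hopp : forall k, weighted (fun i => Cmod (Csub C0 (h i k))) = coordWeight h k).
  { intro k. apply sum_inf_ext. intro i. now rewrite Cmod_opp. }
  assert (Hopp_bd : forall k, bounded_by 1 (fun i => Cmod (Csub C0 (h i k)))).
  { intros k i. rewrite Cmod_opp. apply coords_bounded. }
  assert (Hnear : dWO h zero_op (coord_op m) = coordWeight h 0 * coordWeight h m).
  { rewrite (dWO_rank_one _ _ (fun i => Csub C0 (h i m))), Hopp; [reflexivity| |apply Hopp_bd].
    intro i. apply vsub_zerov_single. }
  assert (Hfar : dWO h (fun x => zero_op (Nat.iter m shiftR x)) (fun x => coord_op m (Nat.iter m shiftR x))
                 = coordWeight h 0 * coordWeight h 0).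
  { rewrite (dWO_rank_one _ _ (fun i => Csub C0 (h i 0%nat))), Hopp; [reflexivity| |apply Hopp_bd].
    intro i. unfold coord_op. rewrite iter_shiftR_at. apply vsub_zerov_single. }
  specialize (Hcont m zero_op (coord_op m) zero_op_in_opball (coord_op_in_opball m)).
  rewrite Hnear, Hfar in Hcont.
  assert (Hlt : coordWeight h 0 * coordWeight h m < d) by nra.
  specialize (Hcont Hlt). lra.
Qed.

End CoordWeight.

Theorem mainTheorem9 (h : nat -> vec) (Hh : dense_seq h) :
  UEC in_ball (rho h) (fun n x => Nat.iter n shiftR x) /\
  ~ UEC in_ball (rho h) (fun n x => Nat.iter n shiftR_adj x) /\
  ~ UEC in_opball (dWO h) (fun n (A : op) => fun x => A (Nat.iter n shiftR x)).
Proof.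
  split; [|split].
  - exact (shift_powers_UEC h Hh).
  - exact (adjoint_powers_not_UEC h Hh).
  - exact (right_composition_not_UEC h Hh).
Qed.
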